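(* Let $G=(V,E)$ be a finite connected graph (loops allowed) equipped with a random walk $m=\{m_v\}_{v\in V}$ which is ergodic, with invariant distribution $\nu$, and suppose $G$ (with $m$) has Ricci curvature at least $\kappa>0$. Then for every $1$-Lipschitz function $f\colon V\to\mathbb{R}$ and every $t\ge 1$, \[\nu\big(f-E_\nu[f]>t\big)\le \exp\Big(-\frac{t^2\kappa}{7}\Big)\quad\text{and}\quad \nu\big(f-E_\nu[f]<-t\big)\le \exp\Big(-\frac{t^2\kappa}{7}\Big).\]
   Context: For a vertex $v$, $\Gamma(v)$ is the set of neighbors of $v$ and $N(v)=\Gamma(v)\cup\{v\}$. A random walk on $G$ is a family $m=\{m_v\}_{v\in V}$ of probability distributions on $V$ with $m_v$ supported on $N(v)$. It is ergodic if it has a unique invariant distribution $\nu$ (i.e. $\sum_{x}\nu(x)m_x(y)=\nu(y)$ for all $y$) and the distributions of the walk converge to $\nu$ from any starting vertex. $d(x,y)$ is the graph distance. For probability distributions $m_1,m_2$ on $V$, the transportation distance is $W(m_1,m_2)=\inf_A\sum_{x,y}A(x,y)d(x,y)$, the infimum over couplings $A\colon V\times V\to[0,1]$ with $\sum_y A(x,y)=m_1(x)$, $\sum_x A(x,y)=m_2(y)$. The (Ollivier) Ricci curvature is $\kappa(x,y)=1-W(m_x,m_y)/d(x,y)$ for $x\ne y$; $G$ has Ricci curvature at least $\kappa_0$ if $\kappa(x,y)\ge\kappa_0$ for all distinct $x,y\in V$. A function $f\colon V\to\mathbb{R}$ is $c$-Lipschitz if $|f(u)-f(v)|\le c$ for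 every edge $uv\in E$. $E_\nu$ denotes expectation with respect to $\nu$, and $\nu(\cdot)$ the $\nu$-probability of an event on $V$. *)

From Stdlib Require Import Reals.
From mathcomp Require Import all_boot.
Set Implicit Arguments. Unset Strict Implicit. Unset Printing Implicit Defensive.
Local Open Scope R_scope.

Definition rsum (V : finType) (F : V -> R) : R := \big[Rplus/R0]_(x : V) F x.

Definition sym_graph (V : finType) (adj : rel V) : Prop := symmetric adj.
Definition graph_connected (V : finType) (adj : rel V) : Prop := forall x y, connect adj x y.

Definition closed_nbhd (V : finType) (adj : rel V) (v u : V) : bool := adj v u || (u == v).

Fixpoint reach (V : finType) (adj : rel V) (n : nat) (x y : V) : bool :=
  match n with
  | O => x == y
  | S n' => [exists z, adj x z && reach adj n' z y]
  end.

(* graph distance: least n with a walk of length n from x to y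
   (in a graph_connected graph it is < #|V|) *)
Definition gdist (V : finType) (adj : rel V) (x y : V) : nat :=
  find (fun n => reach adj n x y) (iota 0 #|V|).

Definition is_distribution (V : finType) (p : V -> R) : Prop :=
  (forall x, 0 <= p x) /\ rsum p = 1.

Definition random_walk (V : finType) (adj : rel V) (m : V -> V -> R) : Prop :=
  forall x, is_distribution (m x) /\ (forall y, m x y <> 0 -> closed_nbhd adj x y).

Definition rw_invariant (V : finType) (m : V -> V -> R) (nu : V -> R) : Prop :=
  is_distribution nu /\ forall y, rsum (fun x => nu x * m x y) = nu y.

Fixpoint mstep (V : finType) (m : V -> V -> R) (t : nat) (x y : V) : R :=
  match t with
  | O => if x == y then 1 else 0
  | S t' => rsum (fun z => mstep m t' x z * m z y)
  end.

Definition ergodic (V : finType) (m : V -> V -> R) : Prop :=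
  exists nu, rw_invariant m nu /\ (forall nu', rw_invariant m nu' -> nu' = nu) /\
    (forall x y, Un_cv (fun t => mstep m t x y) (nu y)).

Definition coupling (V : finType) (m1 m2 : V -> R) (A : V -> V -> R) : Prop :=
  (forall x y, 0 <= A x y <= 1) /\
  (forall x, rsum (fun y => A x y) = m1 x) /\
  (forall y, rsum (fun x => A x y) = m2 y).

Definition transport_cost (V : finType) (adj : rel V) (A : V -> V -> R) : R :=
  rsum (fun x => rsum (fun y => A x y * INR (gdist adj x y))).

Definition is_inf (S : R -> Prop) (w : R) : Prop :=
  (forall c, S c -> w <= c) /\ (forall w', (forall c, S c -> w' <= c) -> w' <= w).

Definition is_W (V : finType) (adj : rel V) (m1 m2 : V -> R) (w : R) : Prop :=
  is_inf (fun c => exists A, coupling m1 m2 A /\ c = transport_cost adj A) w.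

Definition ricci_at_least (V : finType) (adj : rel V) (m : V -> V -> R) (k0 : R) : Prop :=
  forall x y, x <> y -> forall w, is_W adj (m x) (m y) w ->
    k0 <= 1 - w / INR (gdist adj x y).

Definition lipschitz (V : finType) (adj : rel V) (c : R) (f : V -> R) : Prop :=
  forall u v, adj u v -> Rabs (f u - f v) <= c.

Definition expect (V : finType) (nu : V -> R) (f : V -> R) : R := rsum (fun x => nu x * f x).

Definition prob (V : finType) (nu : V -> R) (P : V -> Prop) (Pdec : forall x, {P x} + {~ P x}) : R :=
  rsum (fun x => if Pdec x then nu x else 0).
Arguments prob {V} nu P Pdec.

(* Write [M h x] for the average of [h] over [m_x]. Testing a Lipschitz function against a
   coupling of [m_x] and [m_y] shows that [M] multiplies Lipschitz constants by [1 - kappa].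
   Since a step of the walk moves along at most one edge, the bound [e^y <= 1 + y + 7/4 y^2]
   for [|y| <= 8/7] gives [M (e^(lam g)) x <= exp (lam M g x + 7/4 lam^2 L^2)] when [lam L <= 4/7].
   Iterating over [t] steps, the constants [L (1 - kappa)^k] contribute at most [L^2 / kappa] in
   total, and ergodicity lets [t] tend to infinity:
   [E_nu e^(lam g) <= exp (lam E_nu g + 7 lam^2 L^2 / (4 kappa))].  Markov's inequality with
   [lam = 2 t kappa / 7] gives the bound when [t kappa <= 2]; when [t kappa > 2] the tail is
   empty, because the contraction also bounds the diameter by [2 / kappa].  The lower tail is the
   upper tail of [- f]. *)

From HB Require Import structures.
From Stdlib Require Import Reals Lra Psatz Classical.
From mathcomp Require Import all_boot.
Set Implicit Arguments. Unset Strict Implicit. Unset Printing Implicit Defensive.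
Local Open Scope R_scope.

Lemma Rabs_le_inv (a b : R) : Rabs a <= b -> - b <= a <= b.
Proof. by move=> H; split; [have := Rle_abs (- a); rewrite Rabs_Ropp | have := Rle_abs a]; lra. Qed.

Lemma exp_le (a b : R) : a <= b -> exp a <= exp b.
Proof. by case=> [/exp_increasing | ->]; lra. Qed.

Lemma exp_le_quadratic (y : R) : Rabs y <= 8/7 -> exp y <= 1 + y + 7/4 * y^2.
Proof.
move/Rabs_le_inv=> Hy.
have Hb : 0 < 1 - y/4 by lra.
(* [exp (y/4) <= 1 / (1 - y/4)] from [1 - y/4 <= exp (- y/4)], raised to the fourth power *)
have Hquart : exp (y/4) * (1 - y/4) <= 1.
{ have E : exp (y/4) * exp (- (y/4)) = 1 by rewrite -exp_plus Rplus_opp_r exp_0.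
  rewrite -E; apply: Rmult_le_compat_l; first by left; apply: exp_pos.
  by have := exp_ineq1_le (- (y/4)); lra. }
have Hexp : exp y * (1 - y/4)^4 <= 1.
{ have -> : exp y = exp (y/4) ^ 4.
  { rewrite /= Rmult_1_r -!exp_plus; congr exp; field. }
  rewrite -Rpow_mult_distr -[X in _ <= X](pow1 4).
  apply: pow_incr; split => //; apply: Rmult_le_pos; [left; apply: exp_pos | lra]. }
have Hpoly : 1 <= (1 + y + 7/4 * y^2) * (1 - y/4)^4.
{ have Hq : 0 <= 9/8 - 23/16 * y + 153/256 * y^2 - 27/256 * y^3 + 7/1024 * y^4 by nra.
  have -> : (1 + y + 7/4 * y^2) * (1 - y/4)^4 =
    1 + y^2 * (9/8 - 23/16 * y + 153/256 * y^2 - 27/256 * y^3 + 7/1024 * y^4) by field.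
  have := pow2_ge_0 y; nra. }
have H4 : 0 < (1 - y/4)^4 by apply: pow_lt.
nra.
Qed.

Lemma cv_const (c : R) : Un_cv (fun _ => c) c.
Proof. by move=> e He; exists 0%nat => n _; rewrite /R_dist Rminus_diag_eq // Rabs_R0. Qed.

HB.instance Definition _ :=
  Monoid.isComLaw.Build R R0 Rplus (fun x y z => esym (Rplus_assoc x y z)) Rplus_comm Rplus_0_l.

Section FiniteSums.
Variable V : finType.
Implicit Types (F G : V -> R) (p : V -> R).

Lemma rsum_ext F G : (forall x, F x = G x) -> rsum F = rsum G.
Proof. by move=> H; apply: eq_bigr => x _. Qed.

Lemma rsumD F G : rsum (fun x => F x + G x) = rsum F + rsum G.
Proof. exact: big_split. Qed.

Lemma rsumZ (c : R) F : rsum (fun x => c * F x) = c * rsum F.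
Proof. by rewrite /rsum; elim/big_rec2: _ => [|x a b _ ->]; ring. Qed.

Lemma rsumZr (c : R) F : rsum (fun x => F x * c) = rsum F * c.
Proof. by rewrite Rmult_comm -rsumZ; apply: rsum_ext => x; ring. Qed.

Lemma rsumB F G : rsum (fun x => F x - G x) = rsum F - rsum G.
Proof.
rewrite (rsum_ext (G := fun x => F x + (-1) * G x)) => [|x]; last by ring.
by rewrite rsumD rsumZ; ring.
Qed.

Lemma rsum_le F G : (forall x, F x <= G x) -> rsum F <= rsum G.
Proof.
by move=> H; rewrite /rsum; elim/big_rec2: _ => [|x a b _ Hab]; [lra | apply: Rplus_le_compat].
Qed.

Lemma Rabs_rsum_le F : Rabs (rsum F) <= rsum (fun x => Rabs (F x)).
Proof.
rewrite /rsum; elim/big_rec2: _ => [|x a b _ Hab]; first by rewrite Rabs_R0; lra.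
by have := Rabs_triang (F x) b; lra.
Qed.

Lemma rsum_ge0 F : (forall x, 0 <= F x) -> 0 <= rsum F.
Proof. by move=> H; rewrite /rsum; elim/big_rec: _ => [|x a _ Ha]; [lra | have := H x; lra]. Qed.

Lemma rsum0 : rsum (fun _ : V => 0) = 0.
Proof. by rewrite /rsum big1. Qed.

Lemma rsum_ge_term F x : (forall y, 0 <= F y) -> F x <= rsum F.
Proof.
move=> H; rewrite /rsum (bigD1 x) //=.
have : 0 <= \big[Rplus/R0]_(y | y != x) F y.
  by elim/big_rec: _ => [|y a _ Ha]; [lra | have := H y; lra].
lra.
Qed.

Lemma rsum_exchange (A : V -> V -> R) :
  rsum (fun x => rsum (fun y => A x y)) = rsum (fun y => rsum (fun x => A x y)).
Proof. exact: exchange_big. Qed.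

Lemma rsum_delta (x : V) F : rsum (fun y => (if x == y then 1 else 0) * F y) = F x.
Proof.
rewrite /rsum (bigD1 x) //= eqxx big1; first ring.
by move=> y /negbTE; rewrite eq_sym => ->; ring.
Qed.

Lemma cv_rsum (a : nat -> V -> R) (b : V -> R) :
  (forall y, Un_cv (fun n => a n y) (b y)) -> Un_cv (fun n => rsum (a n)) (rsum b).
Proof.
move=> H; rewrite /rsum; elim: (index_enum V) => [|z r IH].
- by rewrite big_nil; apply: Un_cv_ext (cv_const 0) => n; rewrite big_nil.
- rewrite big_cons; apply: Un_cv_ext (CV_plus _ _ _ _ (H z) IH) => n.
  by rewrite big_cons.
Qed.

Lemma expectD p F G : expect p (fun x => F x + G x) = expect p F + expect p G.
Proof. by rewrite /expect -rsumD; apply: rsum_ext => x; ring. Qed.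

Lemma expectZ p (c : R) F : expect p (fun x => c * F x) = c * expect p F.
Proof. by rewrite /expect -rsumZ; apply: rsum_ext => x; ring. Qed.

Lemma expect_le_supp p F G : (forall x, 0 <= p x) -> (forall x, p x <> 0 -> F x <= G x) ->
  expect p F <= expect p G.
Proof.
move=> Hp H; apply: rsum_le => x.
by case: (Req_dec (p x) 0) => [-> | /H]; [lra | apply: Rmult_le_compat_l].
Qed.

Lemma cv_expect (p : nat -> V -> R) (q : V -> R) F :
  (forall y, Un_cv (fun n => p n y) (q y)) -> Un_cv (fun n => expect (p n) F) (expect q F).
Proof.
move=> H; apply: cv_rsum => y.
exact: CV_mult (H y) (cv_const _).
Qed.

End FiniteSums.

Section Distribution.
Variables (V : finType) (p : V -> R).
Hypothesis Hp : is_distribution p.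

Lemma expect_cst (c : R) : expect p (fun _ => c) = c.
Proof. by rewrite /expect (rsum_ext (G := fun x => c * p x)) ?rsumZ ?(proj2 Hp) => [|x]; ring. Qed.

Lemma expect_center g : expect p (fun x => g x - expect p g) = 0.
Proof. by rewrite (expectD _ g (fun _ => - expect p g)) expect_cst; ring. Qed.

Lemma deviation_expect g x : g x - expect p g = expect p (fun y => g x - g y).
Proof.
have -> : expect p (fun y => g x - g y) = expect p (fun _ => g x) + (-1) * expect p g.
  by rewrite -expectZ -expectD; apply: rsum_ext => y; ring.
by rewrite expect_cst; ring.
Qed.

Section SupportNear.
Variables (g : V -> R) (a L : R).
Hypothesis Hnear : forall y, p y <> 0 -> Rabs (g y - a) <= L.

Lemma expect_near : Rabs (expect p g - a) <= L.
Proof.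
have -> : expect p g - a = expect p (fun y => g y - a).
  by rewrite (expectD _ g (fun _ => - a)) expect_cst.
apply: Rabs_le; split.
- rewrite -[X in X <= _](expect_cst (- L)); apply: expect_le_supp (proj1 Hp) _ => y /Hnear.
  by move/Rabs_le_inv; lra.
- rewrite -[X in _ <= X](expect_cst L); apply: expect_le_supp (proj1 Hp) _ => y /Hnear.
  by move/Rabs_le_inv; lra.
Qed.

Lemma expect_variance_le : expect p (fun y => (g y - expect p g)^2) <= L^2.
Proof.
set mu := expect p g.
(* the mean minimizes the quadratic deviation: [E (g - a)^2 = E (g - mu)^2 + (mu - a)^2] *)
have Hshift : expect p (fun y => (g y - a)^2) =
    expect p (fun y => (g y - mu)^2) + (mu - a)^2.
{ rewrite -[in RHS](expect_cst ((mu - a)^2)) -expectD.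
  have -> : expect p (fun y => (g y - a)^2) =
    expect p (fun y => (g y - mu)^2 + (mu - a)^2) + 2 * (mu - a) * expect p (fun y => g y - mu).
  { rewrite -expectZ -expectD; apply: rsum_ext => y; ring. }
  by rewrite expect_center; ring. }
have HL2 : expect p (fun y => (g y - a)^2) <= L^2.
{ rewrite -[X in _ <= X](expect_cst (L^2)).
  by apply: expect_le_supp (proj1 Hp) _ => y /Hnear /Rabs_le_inv H; nra. }
have := pow2_ge_0 (mu - a); lra.
Qed.

Lemma expect_exp_le (lam : R) : 0 <= lam -> lam * L <= 4/7 ->
  expect p (fun y => exp (lam * g y)) <= exp (lam * expect p g + 7/4 * lam^2 * L^2).
Proof.
move=> Hlam HlamL.
have Hmu := expect_near.
set mu := expect p g in Hmu *; set c := 7/4 * lam^2.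
have Hpt : forall y, p y <> 0 ->
    exp (lam * g y) <= exp (lam * mu) * (1 + lam * (g y - mu) + c * (g y - mu)^2).
{ move=> y /Hnear Hy.
  have Hgm : Rabs (g y - mu) <= 2 * L.
  { have := Rabs_triang (g y - a) (a - mu); rewrite Rabs_minus_sym in Hmu.
    have -> : g y - a + (a - mu) = g y - mu by ring.
    lra. }
  have Hz : Rabs (lam * (g y - mu)) <= 8/7.
  { rewrite Rabs_mult Rabs_pos_eq //.
    have := Rmult_le_compat_l lam _ _ Hlam Hgm; lra. }
  have -> : lam * g y = lam * mu + lam * (g y - mu) by ring.
  rewrite exp_plus; apply: Rmult_le_compat_l; first by left; apply: exp_pos.
  have -> : c * (g y - mu)^2 = 7/4 * (lam * (g y - mu))^2 by rewrite /c; ring.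
  exact: exp_le_quadratic. }
apply: Rle_trans (expect_le_supp (proj1 Hp) Hpt) _.
rewrite expectZ (expectD _ _ (fun y => c * (g y - mu)^2)) (expectD _ (fun _ => 1)).
rewrite !expectZ expect_cst expect_center exp_plus.
apply: Rmult_le_compat_l; first by left; apply: exp_pos.
have := exp_ineq1_le (c * L^2); have := expect_variance_le.
have : 0 <= c by rewrite /c; nra.
rewrite /c -/mu; nra.
Qed.

End SupportNear.

Lemma chernoff_tail g (lam s K : R) : 0 <= lam ->
  expect p (fun x => exp (lam * g x)) <= exp (lam * expect p g + K) ->
  prob p (fun x => g x - expect p g > s) (fun x => Rlt_dec s (g x - expect p g))
    <= exp (- lam * s + K).
Proof.
move=> Hlam Hmgf; set mu := expect p g in Hmgf *.
have Hpt : forall x, (if Rlt_dec s (g x - mu) then p x else 0) <=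
    exp (- lam * (mu + s)) * (p x * exp (lam * g x)).
{ move=> x; have Hpx := proj1 Hp x.
  have -> : exp (- lam * (mu + s)) * (p x * exp (lam * g x)) = p x * exp (lam * (g x - mu - s)).
    by rewrite -Rmult_assoc (Rmult_comm _ (p x)) Rmult_assoc -exp_plus; congr (_ * exp _); ring.
  case: Rlt_dec => Hs; last by apply: Rmult_le_pos => //; left; apply: exp_pos.
  rewrite -[X in X <= _]Rmult_1_r; apply: Rmult_le_compat_l => //.
  have := exp_ineq1_le (lam * (g x - mu - s)); have : 0 <= lam * (g x - mu - s) by nra.
  lra. }
apply: Rle_trans (rsum_le Hpt) _; rewrite rsumZ.
have -> : - lam * s + K = - lam * (mu + s) + (lam * mu + K) by ring.
rewrite exp_plus; apply: Rmult_le_compat_l => //; left; apply: exp_pos.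
Qed.

Lemma tail_empty g (D s : R) : (forall x y, g x - g y <= D) -> D <= s ->
  prob p (fun x => g x - expect p g > s) (fun x => Rlt_dec s (g x - expect p g)) = 0.
Proof.
move=> HD Hs; rewrite /prob -[RHS](rsum0 V); apply: rsum_ext => x.
case: Rlt_dec => //; rewrite deviation_expect => Hlt.
have : expect p (fun y => g x - g y) <= D.
  by rewrite -[X in _ <= X](expect_cst D); apply: expect_le_supp (proj1 Hp) _ => y _; apply: HD.
lra.
Qed.

End Distribution.

Section GraphDistance.
Variables (V : finType) (adj : rel V).

Lemma reach_cat a b x y z : reach adj a x y -> reach adj b y z -> reach adj (a + b) x z.
Proof.
elim: a x => [|a IH] x /=; first by move/eqP => ->.
move=> /existsP [w /andP [Hxw Hw]] Hb; apply/existsP; exists w.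
by rewrite Hxw (IH _ Hw Hb).
Qed.

Lemma reach_path x q : path adj x q -> reach adj (size q) x (last x q).
Proof.
elim: q x => [|z q IH] x //= /andP [Hxz Hq].
by apply/existsP; exists z; rewrite Hxz IH.
Qed.

Lemma gdist_le n x y : reach adj n x y -> (gdist adj x y <= n)%nat.
Proof.
move=> Hr; rewrite /gdist; case: (ltnP n #|V|) => Hn.
- rewrite leqNgt; apply/negP => /(before_find 0%nat).
  by rewrite nth_iota // add0n Hr.
- by apply: leq_trans (find_size _ _) _; rewrite size_iota.
Qed.

Lemma gdist_refl x : gdist adj x x = 0%nat.
Proof. by apply/eqP; rewrite -leqn0; apply: gdist_le => /=. Qed.

Lemma gdist_le1 x y : closed_nbhd adj x y -> (gdist adj x y <= 1)%nat.
Proof.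
case/orP => [Hxy | /eqP ->]; last by rewrite gdist_refl.
by apply: gdist_le => /=; apply/existsP; exists y; rewrite Hxy eqxx.
Qed.

Definition dist_lipschitz (L : R) (g : V -> R) : Prop :=
  forall u v, Rabs (g u - g v) <= L * INR (gdist adj u v).

Hypothesis Hconn : graph_connected adj.

Lemma gdist_reach x y : reach adj (gdist adj x y) x y.
Proof.
have [q Hq Hy] := connectP (Hconn x y).
case/shortenP: Hq Hy => q' Hq' Huniq _ ->.
have Hsize : (size q' < #|V|)%nat.
  by have := max_card (mem (x :: q')); rewrite (card_uniqP Huniq) /=.
have Hhas : has (fun n => reach adj n x (last x q')) (iota 0 #|V|).
  by apply/hasP; exists (size q'); [rewrite mem_iota | exact: reach_path].
have := nth_find 0%nat Hhas; rewrite nth_iota //.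
by move: Hhas; rewrite has_find size_iota.
Qed.

Lemma gdist_triangle x y z : (gdist adj x z <= gdist adj x y + gdist adj y z)%nat.
Proof. by apply: gdist_le; apply: reach_cat (gdist_reach x y) (gdist_reach y z). Qed.

Lemma gdist_eq0 x y : gdist adj x y = 0%nat -> x = y.
Proof. by move=> H; have := gdist_reach x y; rewrite H => /eqP. Qed.

Lemma gdist_gt0 x y : x <> y -> 0 < INR (gdist adj x y).
Proof. by move=> Hxy; apply: lt_0_INR; apply/ltP; rewrite lt0n; apply/eqP => /gdist_eq0. Qed.

Lemma lipschitz_reach (g : V -> R) L n u v : lipschitz adj L g -> reach adj n u v ->
  Rabs (g u - g v) <= L * INR n.
Proof.
move=> Hg; elim: n u => [|n IH] u /=.
  by move/eqP => ->; rewrite Rminus_diag_eq // Rabs_R0; lra.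
move=> /existsP [w /andP [Huw Hw]].
have := Rabs_triang (g u - g w) (g w - g v); have := Hg _ _ Huw; have := IH _ Hw.
have -> : g u - g w + (g w - g v) = g u - g v by ring.
rewrite -/(INR n.+1) S_INR; lra.
Qed.

Lemma lipschitz_dist_lipschitz (g : V -> R) L : lipschitz adj L g -> dist_lipschitz L g.
Proof. by move=> Hg u v; apply: lipschitz_reach (gdist_reach u v). Qed.

Hypothesis Hsym : sym_graph adj.

Lemma reach_sym n x y : reach adj n x y -> reach adj n y x.
Proof.
elim: n x => [|n IH] x /=; first by rewrite eq_sym.
move=> /existsP [z /andP [Hxz Hz]].
have Hzx : reach adj 1 z x by apply/existsP; exists x; rewrite /= eqxx andbT Hsym.
by have := reach_cat (IH _ Hz) Hzx; rewrite addn1.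
Qed.

Lemma gdist_sym x y : gdist adj x y = gdist adj y x.
Proof. by apply/eqP; rewrite eqn_leq !gdist_le // reach_sym // gdist_reach. Qed.

Lemma dist_lipschitz_gdist x : dist_lipschitz 1 (fun z => INR (gdist adj x z)).
Proof.
move=> u v; rewrite Rmult_1_l; apply: Rabs_le.
have := le_INR _ _ (elimT leP (gdist_triangle x v u)).
have := le_INR _ _ (elimT leP (gdist_triangle x u v)).
rewrite !plus_INR (gdist_sym v u); lra.
Qed.

End GraphDistance.

Lemma is_inf_exists (S : R -> Prop) (b : R) :
  (exists c, S c) -> (forall c, S c -> b <= c) -> exists w, is_inf S w.
Proof.
move=> [c Hc] Hb.
have [l [Hub Hlub]] : {l | is_lub (fun r => S (- r)) l}.
{ apply: completeness; last by exists (- c); rewrite Ropp_involutive.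
  by exists (- b) => r /Hb; lra. }
exists (- l); split.
- by move=> c' Hc'; have := Hub (- c'); rewrite Ropp_involutive => /(_ Hc'); lra.
- move=> w' Hw'; suff : l <= - w' by lra.
  by apply: Hlub => r /Hw'; lra.
Qed.

Lemma is_inf_ge_scaled (S : R -> Prop) (w L D : R) : is_inf S w -> 0 <= L ->
  (exists c, S c) -> (forall c, S c -> D <= L * c) -> D <= L * w.
Proof.
move=> [_ Hglb] HL [c Hc] HD; case: (Req_dec L 0) => [HL0 | HL0].
  by have := HD c Hc; rewrite HL0 !Rmult_0_l.
have HDL : L * (D / L) = D by field.
suff : D / L <= w by move/(Rmult_le_compat_l L _ _ HL); rewrite HDL.
by apply: Hglb => c' /HD Hc'; apply: (Rmult_le_reg_l L); lra.
Qed.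

Section Transport.
Variables (V : finType) (adj : rel V) (p q : V -> R).

Lemma product_coupling : is_distribution p -> is_distribution q ->
  coupling p q (fun u v => p u * q v).
Proof.
move=> [Hp0 Hp1] [Hq0 Hq1]; split; [|split].
- move=> u v; have := rsum_ge_term u Hp0; have := rsum_ge_term v Hq0.
  have := Hp0 u; have := Hq0 v; rewrite Hp1 Hq1; split; nra.
- by move=> u; rewrite rsumZ Hq1 Rmult_1_r.
- move=> v; rewrite (rsum_ext (G := fun u => q v * p u)) => [|u]; last by ring.
  by rewrite rsumZ Hp1 Rmult_1_r.
Qed.

Lemma transport_cost_ge0 A : coupling p q A -> 0 <= transport_cost adj A.
Proof.
move=> [HA _]; apply: rsum_ge0 => u; apply: rsum_ge0 => v.
by apply: Rmult_le_pos; [case: (HA u v) | apply: pos_INR].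
Qed.

Lemma expect_diff_le_cost A L g : coupling p q A -> dist_lipschitz adj L g ->
  Rabs (expect p g - expect q g) <= L * transport_cost adj A.
Proof.
move=> [HA [Hrow Hcol]] Hg.
have Ep : expect p g = rsum (fun u => rsum (fun v => A u v * g u)).
  by apply: rsum_ext => u; rewrite rsumZr Hrow; ring.
have Eq : expect q g = rsum (fun u => rsum (fun v => A u v * g v)).
  by rewrite rsum_exchange; apply: rsum_ext => v; rewrite rsumZr Hcol; ring.
rewrite Ep Eq -rsumB (rsum_ext (fun u => esym (rsumB _ _))) /transport_cost -rsumZ.
apply: Rle_trans (Rabs_rsum_le _) _; apply: rsum_le => u.
rewrite -rsumZ; apply: Rle_trans (Rabs_rsum_le _) _; apply: rsum_le => v.
have [HA0 _] := HA u v.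
rewrite -Rmult_minus_distr_l Rabs_mult Rabs_pos_eq // (Rmult_comm L) Rmult_assoc.
by apply: Rmult_le_compat_l => //; rewrite Rmult_comm; apply: Hg.
Qed.

Lemma is_W_ge0 w : is_W adj p q w -> 0 <= w.
Proof. by move=> [_ Hglb]; apply: Hglb => c [A [HA ->]]; apply: transport_cost_ge0 HA. Qed.

Hypotheses (Hp : is_distribution p) (Hq : is_distribution q).

Lemma couplings_inhabited :
  exists c, exists A, coupling p q A /\ c = transport_cost adj A.
Proof.
exists (transport_cost adj (fun u v => p u * q v)), (fun u v => p u * q v).
by split => //; apply: product_coupling.
Qed.

Lemma is_W_exists : exists w, is_W adj p q w.
Proof.
by apply: is_inf_exists couplings_inhabited _ => c [A [HA ->]]; apply: transport_cost_ge0 HA.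
Qed.

Lemma expect_diff_le_W w L g : is_W adj p q w -> 0 <= L -> dist_lipschitz adj L g ->
  Rabs (expect p g - expect q g) <= L * w.
Proof.
move=> Hw HL Hg; apply: is_inf_ge_scaled Hw HL couplings_inhabited _.
by move=> c [A [HA ->]]; apply: expect_diff_le_cost HA Hg.
Qed.

End Transport.

Section RandomWalk.
Variables (V : finType) (adj : rel V) (m : V -> V -> R).
Hypothesis Hwalk : random_walk adj m.

Definition walk_avg (h : V -> R) (x : V) : R := expect (m x) h.

Lemma walk_distribution x : is_distribution (m x).
Proof. by case: (Hwalk x). Qed.

Lemma walk_step_near L g x : 0 <= L -> dist_lipschitz adj L g ->
  forall y, m x y <> 0 -> Rabs (g y - g x) <= L.
Proof.
move=> HL Hg y /(proj2 (Hwalk x)) /gdist_le1 /leP /le_INR Hxy.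
rewrite Rabs_minus_sym; apply: Rle_trans (Hg x y) _.
by rewrite -[X in _ <= X]Rmult_1_r; apply: Rmult_le_compat_l.
Qed.

Lemma walk_avg_near L g x : 0 <= L -> dist_lipschitz adj L g -> Rabs (walk_avg g x - g x) <= L.
Proof.
move=> HL Hg; rewrite /walk_avg.
by apply: (expect_near (walk_distribution x)) => y; apply: walk_step_near.
Qed.

Lemma walk_avg_exp_le L g x (lam : R) : 0 <= L -> dist_lipschitz adj L g ->
  0 <= lam -> lam * L <= 4/7 ->
  walk_avg (fun y => exp (lam * g y)) x <= exp (lam * walk_avg g x + 7/4 * lam^2 * L^2).
Proof.
move=> HL Hg; rewrite /walk_avg.
by apply: (expect_exp_le (walk_distribution x)) => y; apply: walk_step_near.
Qed.

Definition walk_avg_n (t : nat) (h : V -> R) (x : V) : R := expect (mstep m t x) h.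

Lemma mstep_ge0 t x y : 0 <= mstep m t x y.
Proof.
elim: t y => [|t IH] y /=; first by case: (x == y); lra.
by apply: rsum_ge0 => z; apply: Rmult_le_pos (IH z) (proj1 (walk_distribution z) y).
Qed.

Lemma walk_avg_n0 h x : walk_avg_n 0 h x = h x.
Proof. exact: rsum_delta. Qed.

Lemma walk_avg_nS t h x : walk_avg_n t.+1 h x = walk_avg_n t (walk_avg h) x.
Proof.
rewrite /walk_avg_n /expect /=.
rewrite (rsum_ext (G := fun y => rsum (fun z => mstep m t x z * (m z y * h y)))) => [|y].
  by rewrite rsum_exchange; apply: rsum_ext => z; rewrite -rsumZ.
by rewrite -rsumZr; apply: rsum_ext => z; ring.
Qed.

Lemma walk_avg_n_le t h1 h2 x : (forall y, h1 y <= h2 y) -> walk_avg_n t h1 x <= walk_avg_n t h2 x.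
Proof. by move=> H; apply: expect_le_supp => y *; [apply: mstep_ge0 | apply: H]. Qed.

Variable kappa : R.
Hypotheses (Hconn : graph_connected adj) (Hric : ricci_at_least adj m kappa).

Lemma is_W_le_ricci (u v : V) w : u <> v -> is_W adj (m u) (m v) w ->
  w <= (1 - kappa) * INR (gdist adj u v).
Proof.
move=> Huv Hw; have Hd := gdist_gt0 Hconn Huv; have Hk := Hric Huv Hw.
have -> : w = w / INR (gdist adj u v) * INR (gdist adj u v) by field; lra.
by apply: Rmult_le_compat_r; lra.
Qed.

Lemma ricci_le1 (u v : V) : u <> v -> kappa <= 1.
Proof.
move=> Huv; have [w Hw] := is_W_exists adj (walk_distribution u) (walk_distribution v).
have := is_W_ge0 Hw.
have := is_W_le_ricci Huv Hw; have := gdist_gt0 Hconn Huv; nra.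
Qed.

Lemma walk_avg_contract L g : 0 <= L -> dist_lipschitz adj L g ->
  dist_lipschitz adj (L * (1 - kappa)) (walk_avg g).
Proof.
move=> HL Hg u v; case: (eqVneq u v) => [-> | /eqP Huv].
  by rewrite Rminus_diag_eq // Rabs_R0 gdist_refl Rmult_0_r; lra.
have [w Hw] := is_W_exists adj (walk_distribution u) (walk_distribution v).
apply: Rle_trans (expect_diff_le_W (walk_distribution u) (walk_distribution v) Hw HL Hg) _.
by rewrite Rmult_assoc; apply: Rmult_le_compat_l => //; apply: is_W_le_ricci.
Qed.

Lemma diameter_le (Hsym : sym_graph adj) x y : kappa * INR (gdist adj x y) <= 2.
Proof.
have Hg := dist_lipschitz_gdist Hconn Hsym x.
have Hx := walk_avg_near x Rle_0_1 Hg; have Hy := walk_avg_near y Rle_0_1 Hg.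
have Hxy := walk_avg_contract Rle_0_1 Hg y x.
rewrite gdist_refl (gdist_sym Hconn Hsym y x) /= in Hx Hxy.
move: Hx Hy Hxy => /Rabs_le_inv ? /Rabs_le_inv ? /Rabs_le_inv ?; lra.
Qed.

Lemma walk_avg_n_exp_le (lam : R) : 0 < kappa <= 1 -> 0 <= lam ->
  forall t L g, 0 <= L -> lam * L <= 4/7 -> dist_lipschitz adj L g -> forall x,
  walk_avg_n t (fun y => exp (lam * g y)) x
    <= exp (lam * walk_avg_n t g x + 7/4 * lam^2 * L^2 / kappa).
Proof.
move=> [Hk0 Hk1] Hlam t; elim: t => [|t IH] L g HL HlamL Hg x.
  rewrite !walk_avg_n0; apply: exp_le; suff : 0 <= 7/4 * lam^2 * L^2 / kappa by lra.
  by apply: Rmult_le_pos; [nra | left; apply: Rinv_0_lt_compat].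
set K := 7/4 * lam^2 * L^2.
have HL' : 0 <= L * (1 - kappa) by nra.
have HlamL' : lam * (L * (1 - kappa)) <= 4/7 by nra.
rewrite !walk_avg_nS.
have Hstep : walk_avg_n t (walk_avg (fun y => exp (lam * g y))) x
    <= exp K * walk_avg_n t (fun y => exp (lam * walk_avg g y)) x.
{ rewrite -expectZ; apply: walk_avg_n_le => y; rewrite -exp_plus Rplus_comm.
  exact: walk_avg_exp_le. }
apply: Rle_trans Hstep _.
apply: Rle_trans (Rmult_le_compat_l _ _ _ (Rlt_le _ _ (exp_pos K))
  (IH _ _ HL' HlamL' (walk_avg_contract HL Hg) x)) _.
rewrite -exp_plus; apply: exp_le.
(* the only place where [kappa <= 1] is needed *)
have : K + 7/4 * lam^2 * (L * (1 - kappa))^2 / kappa = K / kappa - K * (1 - kappa)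
  by rewrite /K; field; lra.
have : 0 <= K * (1 - kappa) by apply: Rmult_le_pos; rewrite /K; nra.
lra.
Qed.

Variable nu : V -> R.
Hypotheses (Herg : ergodic m) (Hnu : rw_invariant m nu).

Lemma walk_avg_n_cv h x : Un_cv (fun t => walk_avg_n t h x) (expect nu h).
Proof.
have [nu' [Hnu' [Huniq Hcv]]] := Herg.
by rewrite (Huniq _ Hnu); apply: cv_expect => y; apply: Hcv.
Qed.

Lemma invariant_exp_le (lam L : R) g : 0 < kappa <= 1 -> 0 <= lam -> 0 <= L -> lam * L <= 4/7 ->
  dist_lipschitz adj L g ->
  expect nu (fun y => exp (lam * g y)) <= exp (lam * expect nu g + 7/4 * lam^2 * L^2 / kappa).
Proof.
move=> Hk Hlam HL HlamL Hg.
have [x _] : exists x : V, True.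
{ case: (pickP (@predT V)) => [x _ | Hnone]; first by exists x.
  by have := proj2 (proj1 Hnu); rewrite /rsum big_pred0 //; lra. }
apply: Rle_cv_lim (fun t => walk_avg_n_exp_le Hk Hlam t HL HlamL Hg x) (walk_avg_n_cv _ x) _.
apply: continuity_seq; first exact: derivable_continuous_pt (derivable_pt_exp _).
apply: CV_plus (CV_mult _ _ _ _ (cv_const lam) (walk_avg_n_cv g x)) (cv_const _).
Qed.

End RandomWalk.

Lemma upper_tail (V : finType) (adj : rel V) (m : V -> V -> R) (nu : V -> R) (kappa : R)
  (Hsym : sym_graph adj) (Hconn : graph_connected adj)
  (Hwalk : random_walk adj m) (Herg : ergodic m) (Hnu : rw_invariant m nu)
  (Hk : 0 < kappa) (Hric : ricci_at_least adj m kappa)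
  (g : V -> R) (Hg : lipschitz adj 1 g) (t : R) (Ht : 0 <= t) :
  prob nu (fun x => g x - expect nu g > t) (fun x => Rlt_dec t (g x - expect nu g))
    <= exp (- (t ^ 2 * kappa) / 7).
Proof.
have Hg' := lipschitz_dist_lipschitz Hconn Hg.
have Hexp_ge0 := Rlt_le _ _ (exp_pos (- (t ^ 2 * kappa) / 7)).
case: (Rle_lt_dec (t * kappa) 2) => Htk; last first.
  (* the diameter is at most [2 / kappa < t]: no deviation exceeds [t] *)
  have Hkdiv : kappa * (2 / kappa) = 2 by field; lra.
  have Hdiv : forall a, kappa * a <= 2 -> a <= 2 / kappa.
    by move=> a Ha; apply: (Rmult_le_reg_l kappa); lra.
  rewrite (tail_empty (proj1 Hnu) (D := 2 / kappa)) //; last by apply: (Rmult_le_reg_l kappa); lra.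
  move=> x y; have := Rabs_le_inv (Hg' x y); have := Hdiv _ (diameter_le Hwalk Hconn Hric Hsym x y).
  lra.
case: (Rle_lt_dec kappa 1) => Hk1; last first.
  have Hsingle : forall x y : V, x = y.
    by move=> x y; apply: NNPP => /(ricci_le1 Hwalk Hconn Hric); lra.
  by rewrite (tail_empty (proj1 Hnu) (D := 0)) // => x y; rewrite (Hsingle x y); lra.
set lam := 2 * t * kappa / 7.
have Hlam : 0 <= lam by rewrite /lam; nra.
have HlamL : lam * 1 <= 4/7 by rewrite /lam; nra.
have := chernoff_tail (proj1 Hnu) t Hlam
  (invariant_exp_le Hwalk Hconn Hric Herg Hnu (conj Hk Hk1) Hlam Rle_0_1 HlamL Hg').
by have -> : - lam * t + 7/4 * lam^2 * 1^2 / kappa = - (t ^ 2 * kappa) / 7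
  by rewrite /lam; field; lra.
Qed.

Theorem theorem1 (V : finType) (adj : rel V) (m : V -> V -> R) (nu : V -> R) (kappa : R)
  (Hsym : sym_graph adj) (Hconn : graph_connected adj)
  (Hwalk : random_walk adj m) (Herg : ergodic m) (Hnu : rw_invariant m nu)
  (Hk : 0 < kappa) (Hric : ricci_at_least adj m kappa)
  (f : V -> R) (Hf : lipschitz adj 1 f) (t : R) (Ht : 1 <= t) :
  prob nu (fun x => f x - expect nu f > t) (fun x => Rlt_dec t (f x - expect nu f))
    <= exp (- (t ^ 2 * kappa) / 7) /\
  prob nu (fun x => f x - expect nu f < - t) (fun x => Rlt_dec (f x - expect nu f) (- t))
    <= exp (- (t ^ 2 * kappa) / 7).
Proof.
have Ht0 : 0 <= t by lra.
split; first exact: (upper_tail Hsym Hconn Hwalk Herg Hnu Hk Hric Hf Ht0).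
have Hf' : lipschitz adj 1 (fun x => - f x).
  by move=> u v /Hf; rewrite -Rabs_Ropp; congr (Rabs _ <= _); ring.
have := upper_tail Hsym Hconn Hwalk Herg Hnu Hk Hric Hf' Ht0.
have -> : expect nu (fun x => - f x) = (-1) * expect nu f.
  by rewrite -expectZ; apply: rsum_ext => x; ring.
apply: Rle_trans; apply: Req_le; apply: rsum_ext => x.
by case: Rlt_dec => H1; case: Rlt_dec => H2 //; lra.
Qed.
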